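(* Let $(q_n),(r_n)$ be complex sequences vanishing faster than any negative power of $|n|$ as $n\to\pm\infty$ with $1-q_nr_n\neq0$ and $1+q_nr_{n+1}\ne0$ for all $n$. Let $D_n,E_n,D_\infty,E_\infty$ and the sequences $u_n,v_n,p_n,s_n$ be as in the context. Let $\psi_n^{(q,r)},\phi_n^{(q,r)},\bar\psi_n^{(q,r)},\bar\phi_n^{(q,r)}$ be the Jost solutions of system (Q), and similarly with superscripts $(u,v)$ for system (U) with potentials $(u,v)$ and $(p,s)$ for system (U) with potentials $(p,s)$. Put $$\Gamma_n=\begin{bmatrix}(1-z^{-2})\frac1{E_{n-1}}&0\\ \frac{r_n}{E_{n-1}}&\frac1{D_{n-1}}\end{bmatrix},\qquad \Lambda_n=\begin{bmatrix}\frac1{E_{n-1}}&-\frac{q_n}{D_n}\\ \frac{r_n}{E_{n-1}}&\frac1{D_{n-1}}\end{bmatrix}.$$ Then $$\psi_n^{(q,r)}=D_\infty\Gamma_n\psi_n^{(u,v)}=D_\infty\Lambda_n\psi_n^{(p,s)},\qquad \phi_n^{(q,r)}=\frac{1}{1-z^{-2}}\Gamma_n\phi_n^{(u,v)}=\Lambda_n\phi_n^{(p,s)},$$ $$\bar\psi_n^{(q,r)}=\frac{E_\infty}{1-z^{-2}}\Gamma_n\bar\psi_n^{(u,v)}=E_\infty\Lambda_n\bar\psi_n^{(p,s)},\qquad \bar\phi_n^{(q,r)}=\Gamma_n\bar\phi_n^{(u,v)}=\Lambda_n\bar\phi_n^{(p,s)}.$$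
   Context: System (Q): $\begin{bmatrix}\alpha_n\\ \beta_n\end{bmatrix}=\begin{bmatrix} z & (z-z^{-1})q_n\\ z r_n & z^{-1}+(z-z^{-1})q_nr_n\end{bmatrix}\begin{bmatrix}\alpha_{n+1}\\ \beta_{n+1}\end{bmatrix}$, $n\in\mathbb Z$. System (U) with potentials $(a,b)$: $\begin{bmatrix}\xi_n\\ \eta_n\end{bmatrix}=\begin{bmatrix} z & z a_n\\ z^{-1}b_n & z^{-1}\end{bmatrix}\begin{bmatrix}\xi_{n+1}\\ \eta_{n+1}\end{bmatrix}$. Notation: $D_n=\prod_{j=-\infty}^n(1-q_jr_j)$, $E_n=\prod_{j=-\infty}^n(1+q_jr_{j+1})$, $D_\infty=\prod_{j\in\mathbb Z}(1-q_jr_j)$, $E_\infty=\prod_{j\in\mathbb Z}(1+q_jr_{j+1})$; $u_n=q_nE_{n-1}/D_n$, $v_n=(-r_n+r_{n+1}-q_nr_nr_{n+1})D_{n-1}/E_n$, $p_n=(q_n-q_{n+1}-q_nq_{n+1}r_{n+1})E_{n-1}/D_{n+1}$, $s_n=r_{n+1}D_n/E_n$. For each of the three systems and $|z|=1$, the Jost solutions (overbars are not complex conjugation) are the unique solutions with $\psi_n=\begin{bmatrix}o(1)\\ z^n[1+o(1)]\end{bmatrix}$ as $n\to+\infty$; $\phi_n=\begin{bmatrix}z^{-n}[1+o(1)]\\ o(1)\end{bmatrix}$ as $n\to-\infty$; $\bar\psi_n=\begin{bmatrix}z^{-n}[1+o(1)]\\ o(1)\end{bmatrix}$ as $n\to+\infty$;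 $\bar\phi_n=\begin{bmatrix}o(1)\\ z^{n}[1+o(1)]\end{bmatrix}$ as $n\to-\infty$. *)

From Stdlib Require Import Reals ZArith.
From Coquelicot Require Import Coquelicot.
Open Scope C_scope.

Definition Czpow (z : C) (n : Z) : C :=
  match n with
  | Z0 => 1
  | Zpos p => Cpow z (Pos.to_nat p)
  | Zneg p => / Cpow z (Pos.to_nat p)
  end.

Definition lim_pinf (f : Z -> C) (l : C) : Prop :=
  is_lim_seq (fun m : nat => Cmod (f (Z.of_nat m) - l)) 0%R.
Definition lim_minf (f : Z -> C) (l : C) : Prop :=
  is_lim_seq (fun m : nat => Cmod (f (- Z.of_nat m)%Z - l)) 0%R.

Definition rapid_decay (f : Z -> C) : Prop :=
  forall k : nat,
    is_lim_seq (fun m : nat => (INR m ^ k * Cmod (f (Z.of_nat m)))%R) 0%R /\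
    is_lim_seq (fun m : nat => (INR m ^ k * Cmod (f (- Z.of_nat m)%Z))%R) 0%R.

(* partial product  prod_{j = n-N}^{n} f j *)
Fixpoint pprod (f : Z -> C) (n : Z) (N : nat) : C :=
  match N with
  | O => f n
  | S N' => pprod f n N' * f (n - Z.of_nat (S N'))%Z
  end.

(* P = prod_{j=-oo}^{n} f j  (limit of the partial products) *)
Definition is_left_prod (f : Z -> C) (n : Z) (P : C) : Prop :=
  is_lim_seq (fun N : nat => Cmod (pprod f n N - P)) 0%R.

(* D_n = prod_{j<=n} (1 - q_j r_j),  E_n = prod_{j<=n} (1 + q_j r_{j+1}) *)
Definition D_fac (q r : Z -> C) (j : Z) : C := 1 - q j * r j.
Definition E_fac (q r : Z -> C) (j : Z) : C := 1 + q j * r (j + 1)%Z.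

Definition u_seq (q r D E : Z -> C) (n : Z) : C := q n * E (n - 1)%Z / D n.
Definition v_seq (q r D E : Z -> C) (n : Z) : C :=
  (- r n + r (n + 1)%Z - q n * r n * r (n + 1)%Z) * D (n - 1)%Z / E n.
Definition p_seq (q r D E : Z -> C) (n : Z) : C :=
  (q n - q (n + 1)%Z - q n * q (n + 1)%Z * r (n + 1)%Z) * E (n - 1)%Z / D (n + 1)%Z.
Definition s_seq (q r D E : Z -> C) (n : Z) : C := r (n + 1)%Z * D n / E n.

Definition solves_Q (q r : Z -> C) (z : C) (X : Z -> C * C) : Prop :=
  forall n : Z,
    fst (X n) = z * fst (X (n + 1)%Z) + (z - / z) * q n * snd (X (n + 1)%Z) /\
    snd (X n) = z * r n * fst (X (n + 1)%Z)
                + (/ z + (z - / z) * q n * r n) * snd (X (n + 1)%Z).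

Definition solves_U (a b : Z -> C) (z : C) (X : Z -> C * C) : Prop :=
  forall n : Z,
    fst (X n) = z * fst (X (n + 1)%Z) + z * a n * snd (X (n + 1)%Z) /\
    snd (X n) = / z * b n * fst (X (n + 1)%Z) + / z * snd (X (n + 1)%Z).

Definition jost_psi (sol : (Z -> C * C) -> Prop) (z : C) (X : Z -> C * C) : Prop :=
  sol X /\ lim_pinf (fun n => fst (X n)) 0
        /\ lim_pinf (fun n => snd (X n) / Czpow z n) 1.
Definition jost_phi (sol : (Z -> C * C) -> Prop) (z : C) (X : Z -> C * C) : Prop :=
  sol X /\ lim_minf (fun n => fst (X n) / Czpow z (- n)) 1
        /\ lim_minf (fun n => snd (X n)) 0.
Definition jost_psibar (sol : (Z -> C * C) -> Prop) (z : C) (X : Z -> C * C) : Prop :=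
  sol X /\ lim_pinf (fun n => fst (X n) / Czpow z (- n)) 1
        /\ lim_pinf (fun n => snd (X n)) 0.
Definition jost_phibar (sol : (Z -> C * C) -> Prop) (z : C) (X : Z -> C * C) : Prop :=
  sol X /\ lim_minf (fun n => fst (X n)) 0
        /\ lim_minf (fun n => snd (X n) / Czpow z n) 1.

Definition cscale (c : C) (x : C * C) : C * C := (c * fst x, c * snd x).

Definition Gamma_app (r D E : Z -> C) (z : C) (n : Z) (x : C * C) : C * C :=
  ((1 - / (z * z)) / E (n - 1)%Z * fst x + 0 * snd x,
   r n / E (n - 1)%Z * fst x + / D (n - 1)%Z * snd x).

Definition Lambda_app (q r D E : Z -> C) (n : Z) (x : C * C) : C * C :=
  (/ E (n - 1)%Z * fst x + (- q n / D n) * snd x,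
   r n / E (n - 1)%Z * fst x + / D (n - 1)%Z * snd x).

(* The transfer matrix of (Q) has determinant 1, so the Wronskian
   W(X, Y) = X1 Y2 - X2 Y1 of two solutions does not depend on n.  At either end a
   solution A with the asymptotics of psi and a solution B with those of psibar
   satisfy W(A, B) = -1, so a solution that is o(1) at that end has zero Wronskian
   with both and vanishes: a solution of (Q) is determined by its leading
   asymptotics at one end.  A direct computation with D_n = (1 - q_n r_n) D_{n-1}
   and E_n = (1 + q_n r_{n+1}) E_{n-1} shows that Gamma_n and Lambda_n map
   solutions of (U) to solutions of (Q); since q_n, r_n -> 0 while D_n, E_n tend
   to D_inf, E_inf at +oo and to 1 at -oo, they map Jost asymptotics to Jost
   asymptotics up to the stated constants.  The limits of D and E and their
   non-vanishing follow from |f_j - 1| = o(j^-2) for their factors, which makes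
   the partial products over any far window close to 1. *)

From Stdlib Require Import Reals ZArith Lia Lra.
From Coquelicot Require Import Coquelicot.
Open Scope C_scope.

(** * Limits at the ends of Z *)

(* [s = true] is the end [n -> +oo], [s = false] the end [n -> -oo]. *)
Definition Zend (s : bool) (P : Z -> Prop) : Prop :=
  exists N, forall n, (if s then (N <= n)%Z else (n <= N)%Z) -> P n.

Global Instance Zend_filter s : ProperFilter (Zend s).
Proof.
  split.
  - intros P [N HN]. exists N. apply HN. destruct s; lia.
  - split.
    + exists 0%Z. auto.
    + intros P Q [N1 H1] [N2 H2].
      exists (if s then Z.max N1 N2 else Z.min N1 N2).
      intros n Hn; destruct s; split; (apply H1 || apply H2); lia.
    + intros P Q H [N HN]. exists N. auto.
Qed.

Lemma Zend_shift s k P : Zend s P -> Zend s (fun n => P (n + k)%Z).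
Proof. intros [N HN]. exists (N - k)%Z. intros n Hn. apply HN. destruct s; lia. Qed.

Definition Zlim s (f : Z -> C) (l : C) : Prop :=
  forall eps : R, (0 < eps)%R -> Zend s (fun n => (Cmod (f n - l) < eps)%R).

Definition Zbounded s (f : Z -> C) : Prop :=
  exists K : R, Zend s (fun n => (Cmod (f n) <= K)%R).

Section Limits.

Variable s : bool.
Implicit Types (f g : Z -> C) (a b l : C).

Lemma Zlim_ext f g l : (forall n, f n = g n) -> Zlim s f l -> Zlim s g l.
Proof.
  intros E H eps Heps. apply filter_imp with (2 := H eps Heps).
  intros n. rewrite E. auto.
Qed.

Lemma Zlim_const a : Zlim s (fun _ => a) a.
Proof.
  intros eps Heps. apply filter_forall. intros _.
  replace (a - a) with (RtoC 0) by ring. rewrite Cmod_0. exact Heps.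
Qed.

Lemma Zlim_shift f l k : Zlim s f l -> Zlim s (fun n => f (n + k)%Z) l.
Proof. intros H eps Heps. exact (Zend_shift s k _ (H eps Heps)). Qed.

Lemma Zlim_pred f l : Zlim s f l -> Zlim s (fun n => f (n - 1)%Z) l.
Proof. exact (Zlim_shift f l (-1)). Qed.

Lemma Zlim_unique f a b : Zlim s f a -> Zlim s f b -> a = b.
Proof.
  intros Ha Hb. apply Ceq_minus, Cmod_eq_0.
  apply Rle_antisym; [apply Rnot_lt_le; intros Hpos | apply Cmod_ge_0].
  assert (He : (0 < Cmod (a - b) / 2)%R) by lra.
  destruct (Hierarchy.filter_ex _ (filter_and _ _ (Ha _ He) (Hb _ He))) as [n [h1 h2]].
  assert (Cmod (a - b) <= Cmod (f n - a) + Cmod (f n - b))%R.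
  { replace (a - b) with (- (f n - a) + (f n - b)) by ring.
    rewrite <- (Cmod_opp (f n - a)). apply Cmod_triangle. }
  lra.
Qed.

Lemma Zlim_plus f g a b : Zlim s f a -> Zlim s g b -> Zlim s (fun n => f n + g n) (a + b).
Proof.
  intros Hf Hg eps Heps.
  assert (He : (0 < eps / 2)%R) by lra.
  apply filter_imp with (2 := filter_and _ _ (Hf _ He) (Hg _ He)).
  intros n [h1 h2]. replace (f n + g n - (a + b)) with ((f n - a) + (g n - b)) by ring.
  generalize (Cmod_triangle (f n - a) (g n - b)). lra.
Qed.

Lemma Zlim_opp f a : Zlim s f a -> Zlim s (fun n => - f n) (- a).
Proof.
  intros Hf eps Heps. apply filter_imp with (2 := Hf eps Heps).
  intros n h. replace (- f n - - a) with (- (f n - a)) by ring. rewrite Cmod_opp. exact h.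
Qed.

Lemma Zlim_minus f g a b : Zlim s f a -> Zlim s g b -> Zlim s (fun n => f n - g n) (a - b).
Proof. intros Hf Hg. apply Zlim_plus; [exact Hf | apply Zlim_opp, Hg]. Qed.

Lemma Zbounded_lim f l : Zlim s f l -> Zbounded s f.
Proof.
  intros H. exists (Cmod l + 1)%R. apply filter_imp with (2 := H 1%R Rlt_0_1).
  intros n h. replace (f n) with ((f n - l) + l) by ring.
  generalize (Cmod_triangle (f n - l) l). lra.
Qed.

Lemma Zbounded_unimodular f : (forall n, Cmod (f n) = 1%R) -> Zbounded s f.
Proof. intros H. exists 1%R. apply filter_forall. intros n. rewrite H. lra. Qed.

Lemma Zlim0_mult_bounded f g : Zlim s f 0 -> Zbounded s g -> Zlim s (fun n => f n * g n) 0.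
Proof.
  intros Hf [K HK] eps Heps.
  assert (HK1 : (0 < Rabs K + 1)%R) by (generalize (Rabs_pos K); lra).
  assert (He : (0 < eps / (Rabs K + 1))%R) by (apply Rdiv_lt_0_compat; lra).
  apply filter_imp with (2 := filter_and _ _ (Hf _ He) HK).
  intros n [h1 h2].
  replace (f n - 0) with (f n) in h1 by ring. replace (f n * g n - 0) with (f n * g n) by ring.
  rewrite Cmod_mult.
  assert (Cmod (g n) <= Rabs K + 1)%R by (generalize (Rle_abs K); lra).
  apply Rle_lt_trans with (Cmod (f n) * (Rabs K + 1))%R.
  - apply Rmult_le_compat_l; [apply Cmod_ge_0 | lra].
  - replace eps with (eps / (Rabs K + 1) * (Rabs K + 1))%R by (field; lra).
    apply Rmult_lt_compat_r; lra.
Qed.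

Lemma Zlim0_bounded_mult f g : Zbounded s f -> Zlim s g 0 -> Zlim s (fun n => f n * g n) 0.
Proof.
  intros Hf Hg. apply Zlim_ext with (fun n => g n * f n).
  - intros n. apply Cmult_comm.
  - apply Zlim0_mult_bounded; assumption.
Qed.

Lemma Zlim_mult f g a b : Zlim s f a -> Zlim s g b -> Zlim s (fun n => f n * g n) (a * b).
Proof.
  intros Hf Hg.
  assert (Hf0 := Zlim_minus _ _ _ _ Hf (Zlim_const a)).
  assert (Hg0 := Zlim_minus _ _ _ _ Hg (Zlim_const b)).
  replace (a - a) with (RtoC 0) in Hf0 by ring. replace (b - b) with (RtoC 0) in Hg0 by ring.
  assert (H := Zlim_plus _ _ _ _
    (Zlim_plus _ _ _ _ (Zlim0_mult_bounded _ _ Hf0 (Zbounded_lim _ _ Hg))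
                       (Zlim0_bounded_mult _ _ (Zbounded_lim _ _ (Zlim_const a)) Hg0))
    (Zlim_const (a * b))).
  replace (RtoC 0 + RtoC 0 + a * b) with (a * b) in H by ring.
  apply Zlim_ext with (2 := H). intros n. simpl. ring.
Qed.

Lemma Zlim_inv f a : Zlim s f a -> a <> 0 -> Zlim s (fun n => / f n) (/ a).
Proof.
  intros Hf Ha eps Heps. apply Cmod_gt_0 in Ha as Hma.
  assert (H1 : (0 < Cmod a / 2)%R) by lra.
  assert (Ha2 : (0 < Cmod a * Cmod a)%R) by nra.
  assert (H2 : (0 < eps * (Cmod a * Cmod a) / 2)%R)
    by (apply Rdiv_lt_0_compat; [apply Rmult_lt_0_compat |]; lra).
  apply filter_imp with (2 := filter_and _ _ (Hf _ H1) (Hf _ H2)).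
  intros n [h1 h2].
  assert (Hfn : (Cmod a / 2 <= Cmod (f n))%R).
  { generalize (Cmod_triangle (f n) (- (f n - a))). rewrite Cmod_opp.
    replace (f n + - (f n - a)) with a by ring. lra. }
  assert (Hf0 : f n <> 0) by (apply Cmod_gt_0; lra).
  replace (/ f n - / a) with (- (f n - a) / (f n * a)) by (field; auto).
  rewrite Cmod_div by (apply Cmult_neq_0; auto). rewrite Cmod_opp, Cmod_mult.
  apply Rlt_div_l; nra.
Qed.

End Limits.

Definition Zray (s : bool) (m : nat) : Z := if s then Z.of_nat m else (- Z.of_nat m)%Z.

Lemma is_lim_seq_Zend s (g : Z -> R) :
  is_lim_seq (fun m => g (Zray s m)) 0%R ->
  forall eps, (0 < eps)%R -> Zend s (fun n => (Rabs (g n) < eps)%R).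
Proof.
  intros H eps Heps. apply is_lim_seq_spec in H.
  destruct (H (mkposreal eps Heps)) as [N HN].
  exists (Zray s N). intros n Hn.
  assert (Hm : n = Zray s (Z.to_nat (if s then n else - n))) by (destruct s; simpl in *; lia).
  specialize (HN (Z.to_nat (if s then n else - n)) ltac:(destruct s; simpl in *; lia)).
  rewrite <- Hm, Rminus_0_r in HN. exact HN.
Qed.

Lemma lim_pinf_Zlim f l : lim_pinf f l -> Zlim true f l.
Proof.
  intros H eps Heps.
  apply filter_imp with (2 := is_lim_seq_Zend true (fun n => Cmod (f n - l)) H eps Heps).
  intros n. rewrite Rabs_pos_eq by apply Cmod_ge_0. auto.
Qed.

Lemma lim_minf_Zlim f l : lim_minf f l -> Zlim false f l.
Proof.
  intros H eps Heps.
  apply filter_imp with (2 := is_lim_seq_Zend false (fun n => Cmod (f n - l)) H eps Heps).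
  intros n. rewrite Rabs_pos_eq by apply Cmod_ge_0. auto.
Qed.

Lemma rapid_decay_Zend s f k : rapid_decay f ->
  forall eps, (0 < eps)%R -> Zend s (fun n => (Rabs (IZR n) ^ k * Cmod (f n) < eps)%R).
Proof.
  intros H eps Heps.
  assert (Hlim : is_lim_seq (fun m => (Rabs (IZR (Zray s m)) ^ k * Cmod (f (Zray s m)))%R) 0%R).
  { destruct (H k) as [Hp Hm]. destruct s; eapply is_lim_seq_ext; [| exact Hp | | exact Hm];
      intros m; simpl; rewrite ?opp_IZR, ?Rabs_Ropp, <- INR_IZR_INZ, Rabs_pos_eq by apply pos_INR;
      reflexivity. }
  apply filter_imp
    with (2 := is_lim_seq_Zend s (fun n => Rabs (IZR n) ^ k * Cmod (f n))%R Hlim eps Heps).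
  intros n. rewrite Rabs_pos_eq; auto.
  apply Rmult_le_pos; [apply pow_le, Rabs_pos | apply Cmod_ge_0].
Qed.

Lemma rapid_decay_Zlim s f : rapid_decay f -> Zlim s f 0.
Proof.
  intros H eps Heps. apply filter_imp with (2 := rapid_decay_Zend s f 0 H eps Heps).
  intros n. simpl. rewrite Rmult_1_l. replace (f n - 0) with (f n) by ring. auto.
Qed.

Lemma rapid_decay_sq s f : rapid_decay f ->
  forall eps, (0 < eps)%R -> Zend s (fun n => (Cmod (f n) * (IZR n * IZR n) < eps)%R).
Proof.
  intros H eps Heps. apply filter_imp with (2 := rapid_decay_Zend s f 2 H eps Heps).
  intros n. rewrite pow2_abs. simpl. intros h. rewrite Rmult_1_r in h. lra.
Qed.

Section UnitCirclePowers.

Variable z : C.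
Hypothesis z_unit : Cmod z = 1%R.

Lemma Cpow_unit k : Cmod (Cpow z k) = 1%R.
Proof. rewrite Cmod_pow, z_unit. apply pow1. Qed.

Lemma unit_neq0 : z <> 0.
Proof. intros E. rewrite E, Cmod_0 in z_unit. lra. Qed.

Lemma Cpow_unit_neq0 k : Cpow z k <> 0.
Proof. intros E. generalize (Cpow_unit k). rewrite E, Cmod_0. lra. Qed.

Lemma Czpow_unit n : Cmod (Czpow z n) = 1%R.
Proof.
  destruct n; simpl.
  - apply Cmod_1.
  - apply Cpow_unit.
  - rewrite Cmod_inv, Cpow_unit by apply Cpow_unit_neq0. apply Rinv_1.
Qed.

Lemma Czpow_neq0 n : Czpow z n <> 0.
Proof. intros E. generalize (Czpow_unit n). rewrite E, Cmod_0. lra. Qed.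

Lemma Czpow_inv_unit n : Cmod (/ Czpow z n) = 1%R.
Proof. rewrite Cmod_inv, Czpow_unit by apply Czpow_neq0. apply Rinv_1. Qed.

Lemma Czpow_mul_opp n : Czpow z n * Czpow z (- n) = 1.
Proof. destruct n; simpl; [ring | field; apply Cpow_unit_neq0 ..]. Qed.

End UnitCirclePowers.

(** * Infinite products *)

Lemma pprod_S f n N : pprod f n (S N) = f n * pprod f (n - 1)%Z N.
Proof.
  induction N as [|N IH].
  - simpl. ring.
  - change (pprod f n (S (S N))) with (pprod f n (S N) * f (n - Z.of_nat (S (S N)))%Z).
    change (pprod f (n - 1) (S N)) with (pprod f (n - 1) N * f (n - 1 - Z.of_nat (S N))%Z).
    rewrite IH.
    replace (n - Z.of_nat (S (S N)))%Z with (n - 1 - Z.of_nat (S N))%Z by lia. ring.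
Qed.

Lemma pprod_neq0 (f : Z -> C) n K : (forall j, f j <> 0) -> pprod f n K <> 0.
Proof.
  intros Hf. induction K as [|K IH]; [apply Hf |].
  change (pprod f n (S K)) with (pprod f n K * f (n - Z.of_nat (S K))%Z).
  apply Cmult_neq_0; auto.
Qed.

Lemma pprod_near_one_weighted (f : Z -> C) n (x : nat -> R) N :
  (forall k, (k <= N)%nat -> (Cmod (f (n - Z.of_nat k)%Z - 1) <= x k)%R) ->
  (sum_f_R0 x N <= 1 / 2)%R -> (Cmod (pprod f n N - 1) <= 2 * sum_f_R0 x N)%R.
Proof.
  induction N as [|N IH]; intros Hx Hs.
  - simpl in *. specialize (Hx 0%nat (le_n 0)). rewrite Z.sub_0_r in Hx.
    generalize (Cmod_ge_0 (f n - 1)). lra.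
  - assert (Hxp : (0 <= x (S N))%R) by (eapply Rle_trans; [apply Cmod_ge_0 | apply Hx; auto]).
    simpl sum_f_R0 in *.
    assert (IHN : (Cmod (pprod f n N - 1) <= 2 * sum_f_R0 x N)%R) by (apply IH; auto; lra).
    change (pprod f n (S N)) with (pprod f n N * f (n - Z.of_nat (S N))%Z).
    set (p := pprod f n N) in *. set (a := f (n - Z.of_nat (S N))%Z).
    assert (Ha : (Cmod (a - 1) <= x (S N))%R) by (apply Hx; auto).
    replace (p * a - 1) with ((p - 1) * (a - 1) + (p - 1) + (a - 1)) by ring.
    generalize (Cmod_triangle ((p - 1) * (a - 1) + (p - 1)) (a - 1)).
    generalize (Cmod_triangle ((p - 1) * (a - 1)) (p - 1)).
    rewrite Cmod_mult.
    assert (Cmod (p - 1) * Cmod (a - 1) <= 2 * sum_f_R0 x N * x (S N))%R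
      by (apply Rmult_le_compat; auto using Cmod_ge_0).
    nra.
Qed.

Lemma sum_telescope_up (c : R) N : (1 <= c)%R ->
  sum_f_R0 (fun k => 1 / ((c + INR k) * (c + INR k + 1)))%R N = (1 / c - 1 / (c + INR N + 1))%R.
Proof.
  intros Hc. induction N as [|N IH].
  - simpl. field. lra.
  - rewrite tech5, IH, S_INR. generalize (pos_INR N). intros. field. lra.
Qed.

Lemma sum_telescope_down (b : R) N : (INR N + 2 <= b)%R ->
  sum_f_R0 (fun k => 1 / ((b - INR k - 1) * (b - INR k)))%R N = (1 / (b - INR N - 1) - 1 / b)%R.
Proof.
  induction N as [|N IH]; intros Hb.
  - simpl in *. field. lra.
  - rewrite tech5. rewrite S_INR in *. rewrite IH by lra.
    generalize (pos_INR N). intros. field. lra.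
Qed.

Lemma le_div_of_mul_le (a e j2 d : R) :
  (0 <= a)%R -> (a * j2 <= e)%R -> (0 < d <= j2)%R -> (a <= 1 / d * e)%R.
Proof.
  intros. replace a with (1 / d * (a * d))%R by (field; lra).
  apply Rmult_le_compat_l; [apply Rlt_le, Rdiv_lt_0_compat |]; nra.
Qed.

Lemma pprod_near_one (f : Z -> C) n K eps :
  (0 < eps <= 1 / 4)%R -> (n <= -2 \/ 2 <= n - Z.of_nat K)%Z ->
  (forall k, (k <= K)%nat ->
     (Cmod (f (n - Z.of_nat k)%Z - 1) * (IZR (n - Z.of_nat k) * IZR (n - Z.of_nat k)) <= eps)%R) ->
  (Cmod (pprod f n K - 1) <= 2 * eps)%R.
Proof.
  intros Heps Hwin Hf.
  (* on the window |j| >= 2, and 1 / j^2 is dominated by the telescoping weights 1 / (m (m + 1)) *)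
  assert (Hf' : forall k, (k <= K)%nat ->
    (Cmod (f (n - Z.of_nat k)%Z - 1) * ((IZR n - INR k) * (IZR n - INR k)) <= eps)%R).
  { intros k Hk. rewrite INR_IZR_INZ, <- minus_IZR. auto. }
  destruct Hwin as [Hn | Hn]; apply IZR_le in Hn; [| rewrite minus_IZR, <- INR_IZR_INZ in Hn].
  - set (c := (- IZR n - 1)%R).
    assert (Hc : (1 <= c)%R) by (unfold c; lra).
    assert (Hsum : (sum_f_R0 (fun k => 1 / ((c + INR k) * (c + INR k + 1)) * eps) K <= eps)%R).
    { rewrite <- scal_sum, sum_telescope_up by exact Hc.
      assert (0 < 1 / (c + INR K + 1))%R by (apply Rdiv_lt_0_compat; generalize (pos_INR K); lra).
      assert (1 / c <= 1)%R by (apply Rmult_le_reg_r with c; [lra|]; field_simplify; lra).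
      nra. }
    apply Rle_trans with (2 * sum_f_R0 (fun k => 1 / ((c + INR k) * (c + INR k + 1)) * eps) K)%R;
      [apply pprod_near_one_weighted; [| lra] | lra].
    intros k Hk. generalize (pos_INR k). intros.
    apply le_div_of_mul_le with ((IZR n - INR k) * (IZR n - INR k))%R; auto using Cmod_ge_0.
    unfold c. split; nra.
  - set (b := IZR n).
    assert (Hb : (INR K + 2 <= b)%R) by (unfold b; lra).
    assert (Hsum : (sum_f_R0 (fun k => 1 / ((b - INR k - 1) * (b - INR k)) * eps) K <= eps)%R).
    { rewrite <- scal_sum, sum_telescope_down by exact Hb.
      assert (0 < 1 / b)%R by (apply Rdiv_lt_0_compat; generalize (pos_INR K); lra).
      assert (1 / (b - INR K - 1) <= 1)%R
        by (apply Rmult_le_reg_r with (b - INR K - 1)%R; [lra|]; field_simplify; lra).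
      nra. }
    apply Rle_trans with (2 * sum_f_R0 (fun k => 1 / ((b - INR k - 1) * (b - INR k)) * eps) K)%R;
      [apply pprod_near_one_weighted; [| lra] | lra].
    intros k Hk. generalize (le_INR _ _ Hk). intros.
    apply le_div_of_mul_le with ((IZR n - INR k) * (IZR n - INR k))%R; auto using Cmod_ge_0.
    unfold b in *. split; nra.
Qed.

Section LeftProduct.

Variables f P : Z -> C.
Hypothesis P_prod : forall n, is_left_prod f n (P n).

Lemma left_prod_rec n : P n = f n * P (n - 1)%Z.
Proof.
  apply Ceq_minus, Cmod_eq_0, Rle_antisym; [| apply Cmod_ge_0].
  set (u N := (Cmod (pprod f n (S N) - P n)
               + Cmod (f n) * Cmod (pprod f (n - 1)%Z N - P (n - 1)%Z))%R).
  assert (Hu : is_lim_seq u (0 + Cmod (f n) * 0)%R).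
  { apply is_lim_seq_plus'.
    - apply (is_lim_seq_incr_1 (fun N => Cmod (pprod f n N - P n))), P_prod.
    - apply is_lim_seq_mult'; [apply is_lim_seq_const | apply P_prod]. }
  rewrite Rmult_0_r, Rplus_0_r in Hu.
  refine (is_lim_seq_le (fun _ => Cmod (P n - f n * P (n - 1)%Z)) u _ 0%R _
    (is_lim_seq_const _) Hu).
  intros N. unfold u.
  rewrite pprod_S, <- Cmod_mult, <- (Cmod_opp (f n * pprod f (n - 1)%Z N - P n)).
  replace (P n - f n * P (n - 1)%Z)
    with (- (f n * pprod f (n - 1)%Z N - P n) + f n * (pprod f (n - 1)%Z N - P (n - 1)%Z)) by ring.
  apply Cmod_triangle.
Qed.

Lemma left_prod_split K n : P n = pprod f n K * P (n - Z.of_nat K - 1)%Z.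
Proof.
  revert n. induction K as [|K IH]; intros n.
  - simpl. rewrite left_prod_rec. do 3 f_equal. lia.
  - rewrite IH, left_prod_rec.
    change (pprod f n (S K)) with (pprod f n K * f (n - Z.of_nat (S K))%Z).
    replace (n - Z.of_nat K - 1)%Z with (n - Z.of_nat (S K))%Z by lia. ring.
Qed.

Lemma left_prod_le_of_pprod n b :
  (forall N, (Cmod (pprod f n N - 1) <= b)%R) -> (Cmod (P n - 1) <= b)%R.
Proof.
  intros Hb. rewrite <- (Rplus_0_l b).
  refine (is_lim_seq_le (fun _ => Cmod (P n - 1)) (fun N => Cmod (pprod f n N - P n) + b)%R
    _ (0 + b)%R _ (is_lim_seq_const _) (is_lim_seq_plus' _ _ _ _ (P_prod n) (is_lim_seq_const b))).
  intros N. replace (P n - 1) with (- (pprod f n N - P n) + (pprod f n N - 1)) by ring.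
  generalize (Cmod_triangle (- (pprod f n N - P n)) (pprod f n N - 1)). rewrite Cmod_opp.
  specialize (Hb N). lra.
Qed.

Hypothesis f_sq_decay : forall s eps, (0 < eps)%R ->
  Zend s (fun j => (Cmod (f j - 1) * (IZR j * IZR j) < eps)%R).

Lemma left_prod_minf : Zlim false P 1.
Proof.
  intros eps Heps.
  set (e := Rmin (eps / 4) (1 / 4)).
  assert (He : (0 < e <= 1 / 4 /\ e <= eps / 4)%R)
    by (unfold e; repeat split; [apply Rmin_glb_lt | apply Rmin_r | apply Rmin_l]; lra).
  destruct (f_sq_decay false e ltac:(lra)) as [N HN].
  exists (Z.min N (-2)). intros n Hn.
  assert (Cmod (P n - 1) <= 2 * e)%R; [| lra].
  apply left_prod_le_of_pprod. intros K.
  apply pprod_near_one; [lra | left; lia |].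
  intros k _. apply Rlt_le, HN. lia.
Qed.

Hypothesis f_neq0 : forall j, f j <> 0.

Lemma left_prod_neq0 n : P n <> 0.
Proof.
  destruct (left_prod_minf 1%R Rlt_0_1) as [N HN].
  assert (Hlow : forall m, (m <= N)%Z -> P m <> 0).
  { intros m Hm E. specialize (HN m Hm). rewrite E in HN.
    replace (0 - 1) with (- (1)) in HN by ring. rewrite Cmod_opp, Cmod_1 in HN. lra. }
  destruct (Z_le_gt_dec n N) as [Hn | Hn]; [auto |].
  rewrite (left_prod_split (Z.to_nat (n - N - 1)) n).
  apply Cmult_neq_0; [apply pprod_neq0, f_neq0 | apply Hlow; lia].
Qed.

(* the partial products over [M, n] stay within 1/2 of 1, so |P n| >= |P (M - 1)| / 2 *)
Lemma left_prod_lim_neq0 L : Zlim true P L -> L <> 0.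
Proof.
  intros HL EL. subst L.
  destruct (f_sq_decay true (1 / 4) ltac:(lra)) as [N HN].
  set (M := Z.max N 2).
  set (m := Cmod (P (M - 1)%Z)).
  assert (Hm : (0 < m / 2)%R) by (assert (0 < m)%R by apply Cmod_gt_0, left_prod_neq0; lra).
  assert (Hge : forall n, (M <= n)%Z -> (m / 2 <= Cmod (P n))%R).
  { intros n Hn. rewrite (left_prod_split (Z.to_nat (n - M)) n), Cmod_mult.
    replace (n - Z.of_nat (Z.to_nat (n - M)) - 1)%Z with (M - 1)%Z by lia. fold m.
    set (p := pprod f n (Z.to_nat (n - M))).
    assert (Hp : (Cmod (p - 1) <= 2 * (1 / 4))%R).
    { apply pprod_near_one; [lra | right; lia |].
      intros k Hk. apply Rlt_le, HN. lia. }
    generalize (Cmod_triangle p (- (p - 1))). rewrite Cmod_opp.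
    replace (p + - (p - 1)) with (RtoC 1) by ring. rewrite Cmod_1.
    assert (0 <= m)%R by apply Cmod_ge_0. nra. }
  assert (HM : Zend true (fun n => (M <= n)%Z)) by (exists M; auto).
  destruct (Hierarchy.filter_ex _ (filter_and _ _ (HL _ Hm) HM)) as [n [h1 h2]].
  replace (P n - 0) with (P n) in h1 by ring.
  specialize (Hge n h2). lra.
Qed.

End LeftProduct.

(** * Wronskian and uniqueness of Jost solutions *)

Definition wronskian (x y : C * C) : C := fst x * snd y - snd x * fst y.

Definition psub (x y : C * C) : C * C := (fst x - fst y, snd x - snd y).

Lemma Z_seq_const (g : Z -> C) : (forall n, g (n + 1)%Z = g n) -> forall n, g n = g 0%Z.
Proof.
  intros H n. induction n using Z.peano_ind.
  - reflexivity.
  - rewrite <- Z.add_1_r, H. exact IHn.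
  - rewrite <- IHn, <- (H (Z.pred n)). f_equal. lia.
Qed.

Section Wronskian.

Variables (q r : Z -> C) (z : C).
Hypothesis z_neq0 : z <> 0.

Lemma solves_Q_psub X Y : solves_Q q r z X -> solves_Q q r z Y ->
  solves_Q q r z (fun n => psub (X n) (Y n)).
Proof.
  intros HX HY n. destruct (HX n) as [h1 h2], (HY n) as [h3 h4].
  simpl. rewrite h1, h2, h3, h4. split; ring.
Qed.

(* the transfer matrix of (Q) has determinant 1 *)
Lemma wronskian_succ X Y n : solves_Q q r z X -> solves_Q q r z Y ->
  wronskian (X (n + 1)%Z) (Y (n + 1)%Z) = wronskian (X n) (Y n).
Proof.
  intros HX HY. destruct (HX n) as [h1 h2], (HY n) as [h3 h4].
  unfold wronskian. rewrite h1, h2, h3, h4. field. exact z_neq0.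
Qed.

Lemma wronskian_of_lim s X Y L : solves_Q q r z X -> solves_Q q r z Y ->
  Zlim s (fun n => wronskian (X n) (Y n)) L -> forall n, wronskian (X n) (Y n) = L.
Proof.
  intros HX HY HL n.
  assert (Hc := Z_seq_const _ (fun m => wronskian_succ X Y m HX HY)). simpl in Hc.
  rewrite Hc. apply (Zlim_unique s (fun _ => wronskian (X 0%Z) (Y 0%Z))).
  - apply Zlim_const.
  - apply Zlim_ext with (2 := HL). auto.
Qed.

(* if W(A, B) = -1 then -x = W(x, B) A + W(A, x) B for every x *)
Lemma solves_Q_null_of_wronskians s A B X :
  solves_Q q r z A -> solves_Q q r z B -> solves_Q q r z X ->
  Zlim s (fun n => wronskian (A n) (B n)) (-1) ->
  Zlim s (fun n => wronskian (A n) (X n)) 0 -> Zlim s (fun n => wronskian (X n) (B n)) 0 ->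
  forall n, fst (X n) = 0 /\ snd (X n) = 0.
Proof.
  intros HA HB HX HAB HAX HXB n.
  assert (E1 := wronskian_of_lim s A B _ HA HB HAB n).
  assert (E2 := wronskian_of_lim s A X _ HA HX HAX n).
  assert (E3 := wronskian_of_lim s X B _ HX HB HXB n).
  unfold wronskian in *.
  destruct (A n) as [a1 a2], (B n) as [b1 b2], (X n) as [x1 x2]. simpl in *.
  assert (I1 : (x1 * b2 - x2 * b1) * a1 + (a1 * x2 - a2 * x1) * b1 = x1 * (a1 * b2 - a2 * b1))
    by ring.
  assert (I2 : (x1 * b2 - x2 * b1) * a2 + (a1 * x2 - a2 * x1) * b2 = x2 * (a1 * b2 - a2 * b1))
    by ring.
  rewrite E1, E2, E3 in I1, I2.
  split; [replace x1 with (- (x1 * -1)) by ring | replace x2 with (- (x2 * -1)) by ring];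
    rewrite <- ?I1, <- ?I2; ring.
Qed.

End Wronskian.

(* [Gamma_app] and [Lambda_app] are instances of [mat_app] up to conversion. *)
Definition mat_app (a b c d : Z -> C) (n : Z) (x : C * C) : C * C :=
  (a n * fst x + b n * snd x, c n * fst x + d n * snd x).

(* [psi_shape]: the asymptotics of psi at +oo and of phibar at -oo;
   [psibar_shape]: those of psibar at +oo and of phi at -oo. *)
Definition psi_shape s (z : C) (X : Z -> C * C) : Prop :=
  Zlim s (fun n => fst (X n)) 0 /\ Zlim s (fun n => snd (X n) / Czpow z n) 1.

Definition psibar_shape s (z : C) (X : Z -> C * C) : Prop :=
  Zlim s (fun n => fst (X n) / Czpow z (- n)) 1 /\ Zlim s (fun n => snd (X n)) 0.

Lemma jost_psi_shape sol z X : jost_psi sol z X -> sol X /\ psi_shape true z X.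
Proof. intros [HX [H1 H2]]. repeat split; auto using lim_pinf_Zlim. Qed.

Lemma jost_phibar_shape sol z X : jost_phibar sol z X -> sol X /\ psi_shape false z X.
Proof. intros [HX [H1 H2]]. repeat split; auto using lim_minf_Zlim. Qed.

Lemma jost_psibar_shape sol z X : jost_psibar sol z X -> sol X /\ psibar_shape true z X.
Proof. intros [HX [H1 H2]]. repeat split; auto using lim_pinf_Zlim. Qed.

Lemma jost_phi_shape sol z X : jost_phi sol z X -> sol X /\ psibar_shape false z X.
Proof. intros [HX [H1 H2]]. repeat split; auto using lim_minf_Zlim. Qed.

Section Shapes.

Variables (s : bool) (z : C).
Hypothesis z_unit : Cmod z = 1%R.

Lemma Zlim0_mult_Czpow_inv f g : Zlim s f 0 -> Zlim s (fun n => f n / Czpow z (g n)) 0.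
Proof.
  intros Hf. apply Zlim0_mult_bounded; [exact Hf |].
  apply Zbounded_unimodular. intros n. apply Czpow_inv_unit, z_unit.
Qed.

Lemma Zbounded_of_Czpow_ratio f g l :
  Zlim s (fun n => f n / Czpow z (g n)) l -> Zbounded s f.
Proof.
  intros H. destruct (Zbounded_lim _ _ _ H) as [K HK]. exists K.
  apply filter_imp with (2 := HK). intros n.
  rewrite Cmod_div, Czpow_unit by (auto using Czpow_neq0).
  unfold Rdiv. rewrite Rinv_1, Rmult_1_r. auto.
Qed.

Lemma psi_shape_bounded X : psi_shape s z X ->
  Zbounded s (fun n => fst (X n)) /\ Zbounded s (fun n => snd (X n)).
Proof.
  intros [H1 H2].
  split; [exact (Zbounded_lim _ _ _ H1) | exact (Zbounded_of_Czpow_ratio _ _ _ H2)].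
Qed.

Lemma psibar_shape_bounded X : psibar_shape s z X ->
  Zbounded s (fun n => fst (X n)) /\ Zbounded s (fun n => snd (X n)).
Proof.
  intros [H1 H2].
  split; [exact (Zbounded_of_Czpow_ratio _ _ _ H1) | exact (Zbounded_lim _ _ _ H2)].
Qed.

Lemma Zlim0_of_Czpow_ratio f h g :
  Zlim s (fun n => f n / Czpow z (g n)) 1 -> Zlim s (fun n => h n / Czpow z (g n)) 1 ->
  Zlim s (fun n => f n - h n) 0.
Proof.
  intros Hf Hh.
  assert (Hd := Zlim_minus s _ _ _ _ Hf Hh). replace (1 - 1) with (RtoC 0) in Hd by ring.
  assert (H := Zlim0_mult_bounded s _ _ Hd
                 (Zbounded_unimodular s _ (fun n => Czpow_unit z z_unit (g n)))).
  apply Zlim_ext with (2 := H). intros n. field. apply Czpow_neq0, z_unit.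
Qed.

Lemma wronskian_shapes A B : psi_shape s z A -> psibar_shape s z B ->
  Zlim s (fun n => wronskian (A n) (B n)) (-1).
Proof.
  intros [A1 A2] [B1 B2].
  assert (H := Zlim_minus _ _ _ _ _ (Zlim_mult _ _ _ _ _ A1 B2) (Zlim_mult _ _ _ _ _ A2 B1)).
  replace (0 * 0 - 1 * 1) with (RtoC (-1)) in H by ring.
  apply Zlim_ext with (2 := H). intros n. unfold wronskian.
  f_equal. transitivity (snd (A n) * fst (B n) / (Czpow z n * Czpow z (- n))).
  - field. split; apply Czpow_neq0, z_unit.
  - rewrite Czpow_mul_opp by exact z_unit. field.
Qed.

Lemma wronskian_null A X :
  Zbounded s (fun n => fst (A n)) -> Zbounded s (fun n => snd (A n)) ->
  Zlim s (fun n => fst (X n)) 0 -> Zlim s (fun n => snd (X n)) 0 ->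
  Zlim s (fun n => wronskian (A n) (X n)) 0 /\ Zlim s (fun n => wronskian (X n) (A n)) 0.
Proof.
  intros HA1 HA2 HX1 HX2. unfold wronskian. split.
  - assert (H := Zlim_minus _ _ _ _ _ (Zlim0_bounded_mult _ _ _ HA1 HX2)
                                      (Zlim0_bounded_mult _ _ _ HA2 HX1)).
    replace (0 - 0) with (RtoC 0) in H by ring. exact H.
  - assert (H := Zlim_minus _ _ _ _ _ (Zlim0_mult_bounded _ _ _ HX1 HA2)
                                      (Zlim0_mult_bounded _ _ _ HX2 HA1)).
    replace (0 - 0) with (RtoC 0) in H by ring. exact H.
Qed.

Lemma mat_psi_shape κ a b c d δ X :
  Zbounded s a -> Zlim s b 0 -> Zbounded s c -> Zlim s d δ -> κ * δ = 1 ->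
  psi_shape s z X -> psi_shape s z (fun n => cscale κ (mat_app a b c d n (X n))).
Proof.
  intros Ha Hb Hc Hd Hκ SX.
  destruct (psi_shape_bounded X SX) as [_ Y2]. destruct SX as [X1 X2]. split.
  - assert (H := Zlim_mult _ _ _ _ _ (Zlim_const s κ)
      (Zlim_plus _ _ _ _ _ (Zlim0_bounded_mult _ _ _ Ha X1) (Zlim0_mult_bounded _ _ _ Hb Y2))).
    replace (κ * (0 + 0)) with (RtoC 0) in H by ring. exact H.
  - assert (H := Zlim_mult _ _ _ _ _ (Zlim_const s κ)
      (Zlim_plus _ _ _ _ _ (Zlim0_bounded_mult _ _ _ Hc (Zlim0_mult_Czpow_inv _ (fun n => n) X1))
                           (Zlim_mult _ _ _ _ _ Hd X2))).
    assert (Hv : κ * (0 + δ * 1) = 1) by (transitivity (κ * δ); [ring | exact Hκ]).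
    rewrite Hv in H.
    apply Zlim_ext with (2 := H). intros n. simpl. field. apply Czpow_neq0, z_unit.
Qed.

Lemma mat_psibar_shape κ a b c d α X :
  Zlim s a α -> Zbounded s b -> Zlim s c 0 -> Zbounded s d -> κ * α = 1 ->
  psibar_shape s z X -> psibar_shape s z (fun n => cscale κ (mat_app a b c d n (X n))).
Proof.
  intros Ha Hb Hc Hd Hκ SX.
  destruct (psibar_shape_bounded X SX) as [Y1 _]. destruct SX as [X1 X2]. split.
  - assert (H := Zlim_mult _ _ _ _ _ (Zlim_const s κ)
      (Zlim_plus _ _ _ _ _ (Zlim_mult _ _ _ _ _ Ha X1)
         (Zlim0_bounded_mult _ _ _ Hb (Zlim0_mult_Czpow_inv _ (fun n => (- n)%Z) X2)))).
    assert (Hv : κ * (α * 1 + 0) = 1) by (transitivity (κ * α); [ring | exact Hκ]).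
    rewrite Hv in H.
    apply Zlim_ext with (2 := H). intros n. simpl. field. apply Czpow_neq0, z_unit.
  - assert (H := Zlim_mult _ _ _ _ _ (Zlim_const s κ)
      (Zlim_plus _ _ _ _ _ (Zlim0_mult_bounded _ _ _ Hc Y1) (Zlim0_bounded_mult _ _ _ Hd X2))).
    replace (κ * (0 + 0)) with (RtoC 0) in H by ring. exact H.
Qed.

Variables q r : Z -> C.

Lemma solves_Q_eq_of_null_diff A B X Y :
  solves_Q q r z A -> solves_Q q r z B -> solves_Q q r z X -> solves_Q q r z Y ->
  psi_shape s z A -> psibar_shape s z B ->
  Zlim s (fun n => fst (X n) - fst (Y n)) 0 -> Zlim s (fun n => snd (X n) - snd (Y n)) 0 ->
  forall n, X n = Y n.
Proof.
  intros HA HB HX HY SA SB H1 H2 n.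
  destruct (psi_shape_bounded A SA) as [A1 A2], (psibar_shape_bounded B SB) as [B1 B2].
  destruct (wronskian_null A (fun n => psub (X n) (Y n)) A1 A2 H1 H2) as [WA _].
  destruct (wronskian_null B (fun n => psub (X n) (Y n)) B1 B2 H1 H2) as [_ WB].
  destruct (solves_Q_null_of_wronskians q r z (unit_neq0 z z_unit) s A B _ HA HB
              (solves_Q_psub q r z X Y HX HY) (wronskian_shapes A B SA SB) WA WB n) as [E1 E2].
  simpl in E1, E2. destruct (X n), (Y n). simpl in *. f_equal; apply Ceq_minus; auto.
Qed.

Lemma psi_shape_unique A B Y :
  solves_Q q r z A /\ psi_shape s z A -> solves_Q q r z B /\ psibar_shape s z B ->
  solves_Q q r z Y /\ psi_shape s z Y -> forall n, A n = Y n.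
Proof.
  intros [HA SA] [HB SB] [HY SY]. apply (solves_Q_eq_of_null_diff A B); auto.
  - destruct SA as [H _], SY as [H' _].
    assert (H0 := Zlim_minus _ _ _ _ _ H H'). replace (0 - 0) with (RtoC 0) in H0 by ring. exact H0.
  - exact (Zlim0_of_Czpow_ratio _ _ _ (proj2 SA) (proj2 SY)).
Qed.

Lemma psibar_shape_unique A B Y :
  solves_Q q r z A /\ psi_shape s z A -> solves_Q q r z B /\ psibar_shape s z B ->
  solves_Q q r z Y /\ psibar_shape s z Y -> forall n, B n = Y n.
Proof.
  intros [HA SA] [HB SB] [HY SY]. apply (solves_Q_eq_of_null_diff A B); auto.
  - exact (Zlim0_of_Czpow_ratio _ _ _ (proj1 SB) (proj1 SY)).
  - destruct SB as [_ H], SY as [_ H'].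
    assert (H0 := Zlim_minus _ _ _ _ _ H H'). replace (0 - 0) with (RtoC 0) in H0 by ring. exact H0.
Qed.

End Shapes.

(** * The transformations Gamma and Lambda *)

Lemma sq_decay_of_factor (f g w : Z -> C) :
  (forall j, f j - 1 = g j * w j) -> rapid_decay g -> (forall s, Zlim s w 0) ->
  forall s eps, (0 < eps)%R -> Zend s (fun j => (Cmod (f j - 1) * (IZR j * IZR j) < eps)%R).
Proof.
  intros Hf Hg Hw s eps Heps.
  apply filter_imp with (2 := filter_and _ _ (rapid_decay_sq s g Hg eps Heps) (Hw s 1%R Rlt_0_1)).
  intros j [h1 h2]. replace (w j - 0) with (w j) in h2 by ring.
  rewrite Hf, Cmod_mult.
  assert (0 <= Cmod (g j) * (IZR j * IZR j))%R
    by (apply Rmult_le_pos; [apply Cmod_ge_0 | nra]).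
  generalize (Cmod_ge_0 (w j)). nra.
Qed.

Lemma cscale_1 x : cscale 1 x = x.
Proof. destruct x. unfold cscale. simpl. f_equal; ring. Qed.

Definition end_value (s : bool) (l : C) : C := if s then l else 1.

Section DarbouxTransforms.

Variables (q r D E : Z -> C) (Dinf Einf z : C).
Hypotheses (Hq : rapid_decay q) (Hr : rapid_decay r).
Hypothesis HD0 : forall n, 1 - q n * r n <> 0.
Hypothesis HE0 : forall n, 1 + q n * r (n + 1)%Z <> 0.
Hypothesis HD : forall n, is_left_prod (D_fac q r) n (D n).
Hypothesis HE : forall n, is_left_prod (E_fac q r) n (E n).
Hypotheses (HDinf : lim_pinf D Dinf) (HEinf : lim_pinf E Einf).
Hypothesis z_unit : Cmod z = 1%R.

Lemma D_fac_sq_decay : forall s eps, (0 < eps)%R ->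
  Zend s (fun j => (Cmod (D_fac q r j - 1) * (IZR j * IZR j) < eps)%R).
Proof.
  apply sq_decay_of_factor with q (fun j => - r j); [intros; unfold D_fac; ring | exact Hq |].
  intros s. replace (RtoC 0) with (- RtoC 0) by ring. apply Zlim_opp, rapid_decay_Zlim, Hr.
Qed.

Lemma E_fac_sq_decay : forall s eps, (0 < eps)%R ->
  Zend s (fun j => (Cmod (E_fac q r j - 1) * (IZR j * IZR j) < eps)%R).
Proof.
  apply sq_decay_of_factor with q (fun j => r (j + 1)%Z); [intros; unfold E_fac; ring | exact Hq |].
  intros s. apply Zlim_shift, rapid_decay_Zlim, Hr.
Qed.

Lemma D_neq0 n : D n <> 0.
Proof. exact (left_prod_neq0 _ _ HD D_fac_sq_decay HD0 n). Qed.

Lemma E_neq0 n : E n <> 0.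
Proof. exact (left_prod_neq0 _ _ HE E_fac_sq_decay HE0 n). Qed.

Lemma D_end s : Zlim s D (end_value s Dinf).
Proof. destruct s; [apply lim_pinf_Zlim, HDinf | exact (left_prod_minf _ _ HD D_fac_sq_decay)]. Qed.

Lemma E_end s : Zlim s E (end_value s Einf).
Proof. destruct s; [apply lim_pinf_Zlim, HEinf | exact (left_prod_minf _ _ HE E_fac_sq_decay)]. Qed.

Lemma D_end_neq0 s : end_value s Dinf <> 0.
Proof.
  destruct s; [| exact C1_nz].
  exact (left_prod_lim_neq0 _ _ HD D_fac_sq_decay HD0 _ (D_end true)).
Qed.

Lemma E_end_neq0 s : end_value s Einf <> 0.
Proof.
  destruct s; [| exact C1_nz].
  exact (left_prod_lim_neq0 _ _ HE E_fac_sq_decay HE0 _ (E_end true)).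
Qed.

Lemma inv_D_pred_end s : Zlim s (fun n => / D (n - 1)%Z) (/ end_value s Dinf).
Proof. apply Zlim_inv; [apply Zlim_pred, D_end | apply D_end_neq0]. Qed.

Lemma inv_E_pred_end s : Zlim s (fun n => / E (n - 1)%Z) (/ end_value s Einf).
Proof. apply Zlim_inv; [apply Zlim_pred, E_end | apply E_end_neq0]. Qed.

Lemma r_div_E_pred_end s : Zlim s (fun n => r n / E (n - 1)%Z) 0.
Proof.
  assert (H := Zlim_mult _ _ _ _ _ (rapid_decay_Zlim s r Hr) (inv_E_pred_end s)).
  replace (0 * / end_value s Einf) with (RtoC 0) in H by ring. exact H.
Qed.

Lemma q_div_D_end s : Zlim s (fun n => - q n / D n) 0.
Proof.
  assert (H := Zlim_mult _ _ _ _ _ (Zlim_opp _ _ _ (rapid_decay_Zlim s q Hq))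
                 (Zlim_inv _ _ _ (D_end s) (D_end_neq0 s))).
  replace (- 0 * / end_value s Dinf) with (RtoC 0) in H by ring. exact H.
Qed.

Lemma D_rec n : D n = D_fac q r n * D (n - 1)%Z.
Proof. exact (left_prod_rec _ _ HD n). Qed.

Lemma E_rec n : E n = E_fac q r n * E (n - 1)%Z.
Proof. exact (left_prod_rec _ _ HE n). Qed.

Lemma Gamma_solves κ X : solves_U (u_seq q r D E) (v_seq q r D E) z X ->
  solves_Q q r z (fun n => cscale κ (Gamma_app r D E z n (X n))).
Proof.
  intros HX n. destruct (HX n) as [h1 h2].
  unfold cscale, Gamma_app. simpl. rewrite h1, h2. unfold u_seq, v_seq.
  rewrite Z.add_simpl_r, (D_rec n), (E_rec n).
  unfold D_fac, E_fac.
  generalize (unit_neq0 z z_unit) (D_neq0 (n - 1)) (E_neq0 (n - 1)) (HD0 n) (HE0 n). intros.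
  split; field; repeat split; auto.
Qed.

Lemma Lambda_solves κ X : solves_U (p_seq q r D E) (s_seq q r D E) z X ->
  solves_Q q r z (fun n => cscale κ (Lambda_app q r D E n (X n))).
Proof.
  intros HX n. destruct (HX n) as [h1 h2].
  unfold cscale, Lambda_app. simpl. rewrite h1, h2. unfold p_seq, s_seq.
  rewrite (D_rec (n + 1)), Z.add_simpl_r, (D_rec n), (E_rec n).
  unfold D_fac, E_fac.
  generalize (unit_neq0 z z_unit) (D_neq0 (n - 1)) (E_neq0 (n - 1)) (HD0 n) (HE0 n) (HD0 (n + 1)%Z).
  intros.
  split; field; repeat split; auto.
Qed.

Lemma Gamma_psi s κ X :
  solves_U (u_seq q r D E) (v_seq q r D E) z X /\ psi_shape s z X -> κ = end_value s Dinf ->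
  solves_Q q r z (fun n => cscale κ (Gamma_app r D E z n (X n))) /\
  psi_shape s z (fun n => cscale κ (Gamma_app r D E z n (X n))).
Proof.
  intros [HX SX] Hκ. split; [exact (Gamma_solves κ X HX) |].
  apply (mat_psi_shape s z z_unit κ (fun n => (1 - / (z * z)) / E (n - 1)%Z) (fun _ => 0)
           (fun n => r n / E (n - 1)%Z) (fun n => / D (n - 1)%Z) (/ end_value s Dinf)).
  - exact (Zbounded_lim _ _ _ (Zlim_mult _ _ _ _ _ (Zlim_const s _) (inv_E_pred_end s))).
  - apply Zlim_const.
  - exact (Zbounded_lim _ _ _ (r_div_E_pred_end s)).
  - apply inv_D_pred_end.
  - rewrite Hκ. apply Cinv_r, D_end_neq0.
  - exact SX.
Qed.

Lemma Lambda_psi s κ X :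
  solves_U (p_seq q r D E) (s_seq q r D E) z X /\ psi_shape s z X -> κ = end_value s Dinf ->
  solves_Q q r z (fun n => cscale κ (Lambda_app q r D E n (X n))) /\
  psi_shape s z (fun n => cscale κ (Lambda_app q r D E n (X n))).
Proof.
  intros [HX SX] Hκ. split; [exact (Lambda_solves κ X HX) |].
  apply (mat_psi_shape s z z_unit κ (fun n => / E (n - 1)%Z) (fun n => - q n / D n)
           (fun n => r n / E (n - 1)%Z) (fun n => / D (n - 1)%Z) (/ end_value s Dinf)).
  - exact (Zbounded_lim _ _ _ (inv_E_pred_end s)).
  - apply q_div_D_end.
  - exact (Zbounded_lim _ _ _ (r_div_E_pred_end s)).
  - apply inv_D_pred_end.
  - rewrite Hκ. apply Cinv_r, D_end_neq0.
  - exact SX.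
Qed.

Lemma Gamma_psibar s κ X :
  solves_U (u_seq q r D E) (v_seq q r D E) z X /\ psibar_shape s z X ->
  κ * (1 - / (z * z)) = end_value s Einf ->
  solves_Q q r z (fun n => cscale κ (Gamma_app r D E z n (X n))) /\
  psibar_shape s z (fun n => cscale κ (Gamma_app r D E z n (X n))).
Proof.
  intros [HX SX] Hκ. split; [exact (Gamma_solves κ X HX) |].
  apply (mat_psibar_shape s z z_unit κ (fun n => (1 - / (z * z)) / E (n - 1)%Z) (fun _ => 0)
           (fun n => r n / E (n - 1)%Z) (fun n => / D (n - 1)%Z)
           ((1 - / (z * z)) * / end_value s Einf)).
  - exact (Zlim_mult _ _ _ _ _ (Zlim_const s _) (inv_E_pred_end s)).
  - exact (Zbounded_lim _ _ _ (Zlim_const s 0)).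
  - apply r_div_E_pred_end.
  - exact (Zbounded_lim _ _ _ (inv_D_pred_end s)).
  - rewrite Cmult_assoc, Hκ. apply Cinv_r, E_end_neq0.
  - exact SX.
Qed.

Lemma Lambda_psibar s κ X :
  solves_U (p_seq q r D E) (s_seq q r D E) z X /\ psibar_shape s z X -> κ = end_value s Einf ->
  solves_Q q r z (fun n => cscale κ (Lambda_app q r D E n (X n))) /\
  psibar_shape s z (fun n => cscale κ (Lambda_app q r D E n (X n))).
Proof.
  intros [HX SX] Hκ. split; [exact (Lambda_solves κ X HX) |].
  apply (mat_psibar_shape s z z_unit κ (fun n => / E (n - 1)%Z) (fun n => - q n / D n)
           (fun n => r n / E (n - 1)%Z) (fun n => / D (n - 1)%Z) (/ end_value s Einf)).
  - apply inv_E_pred_end.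
  - exact (Zbounded_lim _ _ _ (q_div_D_end s)).
  - apply r_div_E_pred_end.
  - exact (Zbounded_lim _ _ _ (inv_D_pred_end s)).
  - rewrite Hκ. apply Cinv_r, E_end_neq0.
  - exact SX.
Qed.

End DarbouxTransforms.

Theorem theorem3p3
  (q r : Z -> C)
  (Hq : rapid_decay q) (Hr : rapid_decay r)
  (HD0 : forall n : Z, 1 - q n * r n <> 0)
  (HE0 : forall n : Z, 1 + q n * r (n + 1)%Z <> 0)
  (D E : Z -> C) (Dinf Einf : C)
  (HD : forall n : Z, is_left_prod (D_fac q r) n (D n))
  (HE : forall n : Z, is_left_prod (E_fac q r) n (E n))
  (HDinf : lim_pinf D Dinf) (HEinf : lim_pinf E Einf)
  (z : C) (Hz : Cmod z = 1%R) (Hz2 : z * z <> 1)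
  (psi_qr phi_qr psib_qr phib_qr : Z -> C * C)
  (psi_uv phi_uv psib_uv phib_uv : Z -> C * C)
  (psi_ps phi_ps psib_ps phib_ps : Z -> C * C)
  (H1 : jost_psi (solves_Q q r z) z psi_qr)
  (H2 : jost_phi (solves_Q q r z) z phi_qr)
  (H3 : jost_psibar (solves_Q q r z) z psib_qr)
  (H4 : jost_phibar (solves_Q q r z) z phib_qr)
  (H5 : jost_psi (solves_U (u_seq q r D E) (v_seq q r D E) z) z psi_uv)
  (H6 : jost_phi (solves_U (u_seq q r D E) (v_seq q r D E) z) z phi_uv)
  (H7 : jost_psibar (solves_U (u_seq q r D E) (v_seq q r D E) z) z psib_uv)
  (H8 : jost_phibar (solves_U (u_seq q r D E) (v_seq q r D E) z) z phib_uv)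
  (H9 : jost_psi (solves_U (p_seq q r D E) (s_seq q r D E) z) z psi_ps)
  (H10 : jost_phi (solves_U (p_seq q r D E) (s_seq q r D E) z) z phi_ps)
  (H11 : jost_psibar (solves_U (p_seq q r D E) (s_seq q r D E) z) z psib_ps)
  (H12 : jost_phibar (solves_U (p_seq q r D E) (s_seq q r D E) z) z phib_ps) :
  forall n : Z,
    psi_qr n = cscale Dinf (Gamma_app r D E z n (psi_uv n)) /\
    psi_qr n = cscale Dinf (Lambda_app q r D E n (psi_ps n)) /\
    phi_qr n = cscale (/ (1 - / (z * z))) (Gamma_app r D E z n (phi_uv n)) /\
    phi_qr n = Lambda_app q r D E n (phi_ps n) /\
    psib_qr n = cscale (Einf / (1 - / (z * z))) (Gamma_app r D E z n (psib_uv n)) /\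
    psib_qr n = cscale Einf (Lambda_app q r D E n (psib_ps n)) /\
    phib_qr n = Gamma_app r D E z n (phib_uv n) /\
    phib_qr n = Lambda_app q r D E n (phib_ps n).
Proof.
  assert (Hzz : z <> 0 /\ z * z - 1 <> 0)
    by (split; [apply unit_neq0 | apply Cminus_eq_contra]; assumption).
  apply jost_psi_shape in H1, H5, H9. apply jost_phi_shape in H2, H6, H10.
  apply jost_psibar_shape in H3, H7, H11. apply jost_phibar_shape in H4, H8, H12.
  intros n. rewrite <- (cscale_1 (Lambda_app q r D E n (phi_ps n))),
    <- (cscale_1 (Gamma_app r D E z n (phib_uv n))),
    <- (cscale_1 (Lambda_app q r D E n (phib_ps n))).
  repeat split; revert n.
  - apply (psi_shape_unique true z Hz q r psi_qr psib_qr); auto.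
    eapply Gamma_psi; eauto.
  - apply (psi_shape_unique true z Hz q r psi_qr psib_qr); auto.
    eapply Lambda_psi; eauto.
  - apply (psibar_shape_unique false z Hz q r phib_qr phi_qr); auto.
    eapply Gamma_psibar; eauto. simpl. field. exact Hzz.
  - apply (psibar_shape_unique false z Hz q r phib_qr phi_qr); auto.
    eapply Lambda_psibar; eauto.
  - apply (psibar_shape_unique true z Hz q r psi_qr psib_qr); auto.
    eapply Gamma_psibar; eauto. simpl. field. exact Hzz.
  - apply (psibar_shape_unique true z Hz q r psi_qr psib_qr); auto.
    eapply Lambda_psibar; eauto.
  - apply (psi_shape_unique false z Hz q r phib_qr phi_qr); auto.
    eapply Gamma_psi; eauto.
  - apply (psi_shape_unique false z Hz q r phib_qr phi_qr); auto.
    eapply Lambda_psi; eauto.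
Qed.
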